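(* Consider the secure distributed linearly separable computation problem with $\mathsf K_{\rm c}=1$ and $\mathsf M=\frac{\mathsf K}{\mathsf N}(\mathsf N-\mathsf N_{\rm r}+1)$. Then $$\eta^\star\ge\left\lceil\frac{\mathsf N}{\mathsf N-\mathsf N_{\rm r}+1}\right\rceil-1.$$
   Context: Problem setting. $\mathsf K,\mathsf N,\mathsf N_{\rm r},\mathsf M$ are positive integers with $\mathsf N_{\rm r}\le \mathsf N$ and $\mathsf N$ dividing $\mathsf K$. Fix a prime power $\mathsf q$ (sufficiently large) and a positive integer $\mathsf L$. Datasets $D_1,\dots,D_{\mathsf K}$ are independent; message $W_k=f_k(D_k)\in\mathbb F_{\mathsf q}^{\mathsf L}$, with $W_1,\dots,W_{\mathsf K}$ mutually independent and uniform over $\mathbb F_{\mathsf q}^{\mathsf L}$. The user wants $W_1+\cdots+W_{\mathsf K}$. A secure scheme consists of an assignment $\mathcal Z_n\subseteq[\mathsf K]$, $|\mathcal Z_n|\le\mathsf M$; a random variable $Q$ on a finite set independent of the datasets, given to all servers but not the user; transmissions $X_n=\psi_n(\{W_k:k\in\mathcal Z_n\},Q)\in\mathbb F_{\mathsf q}^{\mathsf T_n}$; decodability from $\{X_n:n\in\mathcal A\}$ for every $\mathcal A\subseteq[\mathsf N]$, $|\mathcal A|=\mathsf N_{\rm r}$; security $I(W_1,\dots,W_{\mathsf K};X_1,\dots,X_{\mathsf N}\mid W_1+\cdots+W_{\mathsf K})=0$. Communication cost $\mathsf R=\max_{|\mathcal A|=\mathsf N_{\rm r}}\sum_{n\in\mathcal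 A}\mathsf T_n/\mathsf L$; randomness size $\eta=H(Q)/\mathsf L$ ($\mathsf q$-ary units). $\mathsf R^\star$ is the minimum communication cost over secure schemes, and $\eta^\star$ is the minimum randomness size over secure schemes with $\mathsf R=\mathsf R^\star$. *)

From HB Require Import structures.
From mathcomp Require Import all_boot all_order all_algebra.
From mathcomp Require Import Rstruct.
From Stdlib Require Import Reals.

Set Implicit Arguments.
Unset Strict Implicit.
Unset Printing Implicit Defensive.

Import Order.TTheory GRing.Theory Num.Theory.
Local Open Scope ring_scope.

Definition prob_eq (Om : finType) (mu : Om -> R) (V : eqType) (f : Om -> V) (w : Om) : R :=
  \sum_(w' : Om | f w' == f w) mu w'.

(* Entropy of f : Om -> V under the distribution mu, in base-q units:
   H(f) = - sum_w mu(w) log_q P[f = f w]  ( = - sum_v P[f=v] log_q P[f=v] ). *)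
Definition entropy_q (q : nat) (Om : finType) (mu : Om -> R) (V : eqType) (f : Om -> V) : R :=
  - (\sum_(w : Om) mu w * (ln (prob_eq mu f w) / ln (q%:R))).

Definition cond_mutinf_q (q : nat) (Om : finType) (mu : Om -> R)
    (VA VB VC : eqType) (A : Om -> VA) (B : Om -> VB) (C : Om -> VC) : R :=
  entropy_q q mu (fun w => (A w, C w)) + entropy_q q mu (fun w => (B w, C w))
  - entropy_q q mu (fun w => (A w, B w, C w)) - entropy_q q mu C.

(* A (candidate) scheme for K datasets, N servers, over the field F, message length L.  Common randomness Q takes values in the
   finite set QT with distribution pQ.  Server n is assigned Z n and sends
   X_n = psi n w Q in F^(T n). *)
Record scheme (K N : nat) (F : finFieldType) (L : nat) := Scheme {
  Zs : 'I_N -> {set 'I_K};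
  QT : finType;
  pQ : QT -> R;
  Tn : 'I_N -> nat;
  psi : forall n : 'I_N, {ffun 'I_K -> 'rV[F]_L} -> QT -> 'rV[F]_(Tn n)
}.
Arguments Zs {K N F L} s _.
Arguments QT {K N F L} s.
Arguments pQ {K N F L} s _.
Arguments Tn {K N F L} s _.
Arguments psi {K N F L} s n _ _.

Section Model.
Variables (K N Nr M : nat) (F : finFieldType) (L : nat).

Definition msgs := {ffun 'I_K -> 'rV[F]_L}.

Definition omega (S : scheme K N F L) := (msgs * QT S)%type.

(* joint law: W uniform on (F^L)^K, independent of Q ~ pQ *)
Definition mu (S : scheme K N F L) (o : omega S) : R :=
  pQ S o.2 / (#|{: msgs}|%:R).

Definition sumW (w : msgs) : 'rV[F]_L := \sum_(k < K) w k.

Definition rowseq m (x : 'rV[F]_m) : seq F := [seq x 0 j | j <- enum 'I_m].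

Definition Xall (S : scheme K N F L) (o : omega S) : {ffun 'I_N -> seq F} :=
  [ffun n => rowseq (psi S n o.1 o.2)].

Definition valid_scheme (S : scheme K N F L) : Prop :=
  (forall n, leq #|Zs S n| M) /\
  (forall x, 0 <= pQ S x) /\ (\sum_(x : QT S) pQ S x = 1) /\
  (forall n (w w' : msgs) x,
      (forall k, k \in Zs S n -> w k = w' k) -> psi S n w x = psi S n w' x) /\
  (* decodability: W_1+...+W_K is (almost surely) a function of {X_n : n in A}
     for every A with |A| = Nr *)
  (forall A : {set 'I_N}, #|A| = Nr ->
     forall o o' : omega S, 0 < mu o -> 0 < mu o' ->
       (forall n, n \in A -> psi S n o.1 o.2 = psi S n o'.1 o'.2) ->
       sumW o.1 = sumW o'.1) /\
  cond_mutinf_q #|F| (@mu S) (fun o : omega S => o.1) (@Xall S)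
                (fun o : omega S => sumW o.1) = 0.

Definition comm_cost (S : scheme K N F L) : R :=
  (\max_(A : {set 'I_N} | #|A| == Nr) \sum_(n in A) Tn S n)%N%:R / L%:R.

Definition rand_size (S : scheme K N F L) : R :=
  entropy_q #|F| (@mu S) (fun o : omega S => o.2) / L%:R.

End Model.

Definition ceildiv (a b : nat) : nat := divn (a + b).-1 b.

(* Any Nr servers decode the sum, so every message is stored by at least
   N - Nr + 1 servers, and the storage budget M = (K/N)(N - Nr + 1) makes this
   exact.  Hence a server storing W_k determines W_k once the other messages are
   known: together with the Nr - 1 servers not storing W_k it decodes the sum.
   Greedily picking v = ceil(N / (N - Nr + 1)) messages T (possible because
   (v - 1) M < K), each stored by a new server but by none of the servers
   picked before, the messages outside T and the transmissions X of the picked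
   servers determine every message, so H(X, C) >= v L for the sum C.  Security
   reads H(W, C) + H(X, C) = H(W, X, C) + H(C), and H(W, X, C) <= H(Q) + H(W, C)
   because X is a function of (W, Q); with H(C) <= L this gives
   H(Q) >= (v - 1) L.  This holds for every secure scheme and every field. *)

From Pilot Require Import Defs.
From HB Require Import structures.
From mathcomp Require Import all_boot all_order all_algebra.
From mathcomp Require Import Rstruct.
From Stdlib Require Import Reals.
From mathcomp Require Import zify lra.
Import Order.TTheory GRing.Theory Num.Theory.
Local Open Scope ring_scope.

Set Implicit Arguments.
Unset Strict Implicit.
Unset Printing Implicit Defensive.

Lemma ler_ln (x y : R) : 0 < x -> x <= y -> ln x <= ln y.
Proof.
move=> x_gt0 le_xy; have [->|neq_xy] := eqVneq x y; first by [].
apply/RleP; left; apply: ln_increasing; first exact/RltP.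
by apply/RltP; rewrite lt_neqAle neq_xy le_xy.
Qed.

Lemma ln_gt0 (x : R) : 1 < x -> 0 < ln x.
Proof.
move=> x_gt1; have := ln_increasing 1 x; rewrite ln_1.
by move=> ln_mono; apply/RltP/ln_mono; apply/RltP; rewrite ?R1E.
Qed.

Lemma ln_invXn (x : R) n : 0 < x -> ln ((x ^+ n)^-1) = - (n%:R * ln x).
Proof.
move=> x_gt0; have xn_gt0 : 0 < x ^+ n by rewrite exprn_gt0.
rewrite -RinvE ln_Rinv; last exact/RltP.
by rewrite -RpowE ln_pow ?INRE //; exact/RltP.
Qed.

Section Entropy.
Variables (q : nat) (Om : finType) (mu : Om -> R).
Hypothesis q_gt1 : (1 < q)%nat.
Hypothesis mu_ge0 : forall o, 0 <= mu o.
Hypothesis mu_sum1 : \sum_o mu o = 1.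

Local Notation lnq := (ln q%:R).

Lemma lnq_gt0 : 0 < lnq.
Proof. by apply: ln_gt0; rewrite ltr1n. Qed.

Lemma entropy_qE (V : eqType) (f : Om -> V) :
  entropy_q q mu f = \sum_o mu o * (- ln (prob_eq mu f o) / lnq).
Proof. by rewrite /entropy_q RoppE -sumrN; apply: eq_bigr => o _; rewrite mulNr mulrN. Qed.

Lemma prob_eq_ge (V : eqType) (f : Om -> V) o : mu o <= prob_eq mu f o.
Proof. by rewrite /prob_eq (bigD1 o) //= lerDl sumr_ge0. Qed.

Lemma ler_expect (a b : Om -> R) : (forall o, 0 < mu o -> a o <= b o) ->
  \sum_o mu o * a o <= \sum_o mu o * b o.
Proof.
move=> le_ab; apply: ler_sum => o _; have := mu_ge0 o; rewrite le0r.
by case/orP=> [/eqP -> | mu_gt0]; rewrite ?mul0r // ler_wpM2l ?le_ab.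
Qed.

Lemma expect_const c : \sum_o mu o * c = c.
Proof. by rewrite -mulr_suml mu_sum1 mul1r. Qed.

Lemma surprisal_le (x y : R) : 0 < x -> x <= y -> - ln y / lnq <= - ln x / lnq.
Proof. by move=> x_gt0 le_xy; rewrite ler_pM2r ?invr_gt0 ?lnq_gt0 // lerN2 ler_ln. Qed.

Lemma surprisal_invXn n : - ln ((q%:R ^+ n)^-1) / lnq = n%:R.
Proof. by rewrite ln_invXn ?ltr0n 1?ltnW // opprK mulfK // gt_eqF ?lnq_gt0. Qed.

Lemma entropy_ge (V : eqType) (f : Om -> V) n :
  (forall o, 0 < mu o -> prob_eq mu f o <= (q%:R ^+ n)^-1) -> n%:R <= entropy_q q mu f.
Proof.
move=> le_prob; rewrite entropy_qE -(expect_const n%:R); apply: ler_expect => o mu_gt0.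
rewrite -[X in X <= _]surprisal_invXn; apply: surprisal_le; last exact: le_prob.
exact: lt_le_trans mu_gt0 (prob_eq_ge f o).
Qed.

Lemma entropy_le (V : eqType) (f : Om -> V) n :
  (forall o, 0 < mu o -> (q%:R ^+ n)^-1 <= prob_eq mu f o) -> entropy_q q mu f <= n%:R.
Proof.
move=> ge_prob; rewrite entropy_qE -(expect_const n%:R); apply: ler_expect => o mu_gt0.
rewrite -[X in _ <= X]surprisal_invXn; apply: surprisal_le; last exact: ge_prob.
by rewrite invr_gt0 exprn_gt0 // ltr0n ltnW.
Qed.

Lemma entropy_le_add (VA VB VC : eqType) (f : Om -> VA) (g : Om -> VB) (h : Om -> VC) :
  (forall o, 0 < mu o -> prob_eq mu f o * prob_eq mu g o <= prob_eq mu h o) ->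
  entropy_q q mu h <= entropy_q q mu f + entropy_q q mu g.
Proof.
move=> le_prob; rewrite !entropy_qE -big_split /=.
under [X in _ <= X]eq_bigr do rewrite -mulrDr -mulrDl -opprD.
apply: ler_expect => o mu_gt0.
have prob_gt0 (V : eqType) (k : Om -> V) : 0 < prob_eq mu k o.
  exact: lt_le_trans mu_gt0 (prob_eq_ge k o).
rewrite -RplusE -ln_mult; try exact/RltP.
by apply: surprisal_le; rewrite ?le_prob // mulr_gt0.
Qed.

End Entropy.

Lemma exists_subset_card (T : finType) (B : {set T}) j : (j <= #|B|)%nat ->
  exists2 A : {set T}, A \subset B & #|A| = j.
Proof.
move=> le_jB; have : (0 < #|[set A : {set T} | A \subset B & #|A| == j]|)%nat.
  by rewrite cards_draws bin_gt0.
by case/card_gt0P => A; rewrite inE => /andP[? /eqP]; exists A.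
Qed.

Lemma card_bigcup_le (I T : finType) (P : {pred I}) (B : I -> {set T}) :
  (#|\bigcup_(i in P) B i| <= \sum_(i in P) #|B i|)%nat.
Proof.
elim/big_rec2: _ => [|i n U _ le_Un]; first by rewrite cards0.
by apply: leq_trans (leq_card_setU _ _) _; rewrite leq_add2l.
Qed.

Lemma eq_of_sum_le_lower_bound (I : finType) (a : I -> nat) m :
  (forall i, m <= a i)%nat -> (\sum_i a i <= #|I| * m)%nat -> forall i, a i = m.
Proof.
move=> ge_a le_sum i; have := @leqif_sum I xpredT (fun i => m == a i) (fun=> m) a.
rewrite sum_nat_const => /(_ (fun i _ => leqif_eq (ge_a i))) [_].
rewrite eqn_leq le_sum -(sum_nat_const I m) leq_sum // => /esym/forallP/(_ i).
by move=> /eqP.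
Qed.

Lemma ceildiv_pred_mul_lt a b : (0 < a)%nat -> ((ceildiv a b).-1 * b < a)%nat.
Proof.
move=> a_gt0; have := leq_divM (a + b).-1 b; rewrite -/(ceildiv a b).
case: (ceildiv a b) => [|v] //= le_v; rewrite mulSn in le_v; lia.
Qed.

Lemma sumW_sub K F L (w w' : msgs K F L) k :
  (forall k', k' != k -> w k' = w' k') -> sumW w - sumW w' = w k - w' k.
Proof.
move=> eq_off; rewrite /sumW (bigD1 k) //= [X in _ - X](bigD1 k) //=.
rewrite (eq_bigr (fun i => w' i)) => [|i /eq_off //].
by rewrite opprD addrACA subrr addr0.
Qed.

Lemma card_ffun_sum_fibre (V : finZmodType) K (k0 : 'I_K) (c : V) :
  leq #|{: {ffun 'I_K -> V}}| (muln #|V| #|[set w : {ffun 'I_K -> V} | \sum_k w k == c]|).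
Proof.
pose f (w : {ffun 'I_K -> V}) :=
  (\sum_k w k, [ffun k => w k - (if k == k0 then \sum_k w k - c else 0)]).
have f_inj : injective f.
  move=> w1 w2 [eq_sum /ffunP eq_w]; apply/ffunP => k; have := eq_w k.
  by rewrite !ffunE eq_sum => /addIr.
rewrite -cardsT -(card_imset _ f_inj) -[#|V|]cardsT -cardsX.
apply/subset_leq_card/subsetP => _ /imsetP[w _ ->]; rewrite !inE /=.
under eq_bigr do rewrite ffunE.
by rewrite sumrB -big_mkcond big_pred1_eq opprB addrC subrK.
Qed.

Definition holders K N (Z : 'I_N -> {set 'I_K}) (k : 'I_K) := [set n | k \in Z n].

Lemma sum_card_holders K N (Z : 'I_N -> {set 'I_K}) :
  (\sum_k #|holders Z k| = \sum_n #|Z n|)%nat.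
Proof.
transitivity (\sum_k \sum_n ((k \in Z n) : nat))%nat.
  by apply: eq_bigr => k _; rewrite -sum1_card big_mkcond; apply: eq_bigr => n _; rewrite inE.
by rewrite exchange_big; apply: eq_bigr => n _; rewrite -sum1_card [RHS]big_mkcond.
Qed.

Section Scheme.
Variables (K N Nr M : nat) (F : finFieldType) (L : nat) (S : scheme K N F L).
Hypothesis K_gt0 : (0 < K)%nat.
Hypothesis L_gt0 : (0 < L)%nat.
Hypothesis Nr_gt0 : (0 < Nr)%nat.
Hypothesis Nr_le_N : (Nr <= N)%nat.
Hypothesis N_dvd_K : (N %| K)%nat.
Hypothesis M_def : M = (K %/ N * (N - Nr + 1))%nat.
Hypothesis S_valid : valid_scheme Nr M S.

Local Notation msgs := (msgs K F L).
Local Notation mu := (@mu K N F L S).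
Local Notation card_msgs := #|{: msgs}|.
Local Notation holders := (holders (Zs S)).

Lemma pQ_ge0 x : 0 <= pQ S x.
Proof. by case: S_valid => _ []. Qed.

Lemma pQ_sum1 : \sum_x pQ S x = 1.
Proof. by case: S_valid => _ [_ []]. Qed.

Lemma card_Zs_le n : (#|Zs S n| <= M)%nat.
Proof. by case: S_valid. Qed.

Lemma psi_local n (w w' : msgs) x :
  (forall k, k \in Zs S n -> w k = w' k) -> psi S n w x = psi S n w' x.
Proof. by case: S_valid => _ [_ [_ [psi_loc _]]]; apply: psi_loc. Qed.

Lemma card_F_gt0 : (0 < #|F|)%nat.
Proof. exact: ltn_trans (card_finNzRing_gt1 F). Qed.

Lemma card_row : #|{: 'rV[F]_L}| = expn #|F| L.
Proof. by rewrite card_mx mul1n. Qed.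

Lemma card_msgs_gt0 : (0 < card_msgs)%nat.
Proof. by apply/card_gt0P; exists 0. Qed.

Lemma mu_gt0E o : (0 < mu o) = (0 < pQ S o.2).
Proof. by rewrite /Defs.mu pmulr_lgt0 // invr_gt0 ltr0n card_msgs_gt0. Qed.

Lemma sumW_eq_of_psi_eq (A : {set 'I_N}) x (w w' : msgs) : #|A| = Nr -> 0 < pQ S x ->
  (forall n, n \in A -> psi S n w x = psi S n w' x) -> sumW w = sumW w'.
Proof.
case: S_valid => _ [_ [_ [_ [decode _]]]] card_A pQ_gt0 eq_psi.
by apply: (decode A card_A (w, x) (w', x)); rewrite ?mu_gt0E.
Qed.

Lemma exists_pQ_gt0 : exists x, 0 < pQ S x.
Proof.
apply/existsP; apply: contraT => /existsPn pQ_le0.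
have : \sum_x pQ S x = 0.
  by apply: big1 => x _; apply/eqP; rewrite eq_le pQ_ge0 andbT leNgt pQ_le0.
by rewrite pQ_sum1 => /eqP; rewrite oner_eq0.
Qed.

Lemma card_holders_ge k : (N - Nr + 1 <= #|holders k|)%nat.
Proof.
rewrite leqNgt; apply/negP => lt_holders.
have : (Nr <= #|~: holders k|)%nat by move: (cardsC (holders k)); rewrite card_ord; lia.
case/exists_subset_card => A sub_A card_A.
have [x pQ_gt0] := exists_pQ_gt0.
pose w : msgs := [ffun=> 0].
pose w' : msgs := [ffun k' => if k' == k then const_mx 1 else 0].
have : sumW w' - sumW w = 0.
  rewrite (@sumW_eq_of_psi_eq A x w' w) ?subrr // => n n_A.
  apply: psi_local => k' k'_Zn; rewrite !ffunE; case: eqP => // eq_k'.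
  by move: (subsetP sub_A n n_A); rewrite !inE -eq_k' k'_Zn.
rewrite (@sumW_sub _ _ _ _ _ k); last by move=> k' /negbTE neq_k'; rewrite !ffunE neq_k'.
rewrite !ffunE eqxx subr0 => /matrixP /(_ 0 (Ordinal L_gt0)); rewrite !mxE => /eqP.
by rewrite oner_eq0.
Qed.

Lemma card_holders k : #|holders k| = (N - Nr + 1)%nat.
Proof.
apply: (eq_of_sum_le_lower_bound card_holders_ge); rewrite sum_card_holders card_ord.
apply: leq_trans (_ : N * M <= _)%nat.
  rewrite -[X in (_ <= X * _)%nat]card_ord -sum_nat_const.
  by apply: leq_sum => n _; exact: card_Zs_le.
by rewrite M_def mulnA [(N * _)%nat]mulnC divnK.
Qed.

Definition decodes (T : {set 'I_K}) (V : {set 'I_N}) :=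
  forall x, 0 < pQ S x -> forall w w' : msgs,
  (forall k, k \notin T -> w k = w' k) ->
  (forall n, n \in V -> psi S n w x = psi S n w' x) -> w = w'.

Lemma decodes_holder k n : k \in Zs S n -> decodes [set k] [set n].
Proof.
move=> k_Zn x pQ_gt0 w w' eq_off eq_psi.
have eq_off' k' : k' != k -> w k' = w' k' by move=> ?; apply: eq_off; rewrite inE.
have : (Nr.-1 <= #|~: holders k|)%nat.
  by move: (cardsC (holders k)); rewrite card_ord card_holders; lia.
case/exists_subset_card => A sub_A card_A.
have n_notin_A : n \notin A by apply/negP => /(subsetP sub_A); rewrite !inE k_Zn.
have card_nA : #|n |: A| = Nr by rewrite cardsU1 n_notin_A card_A; lia.
have : sumW w - sumW w' = 0.
  rewrite (@sumW_eq_of_psi_eq (n |: A) x w w') ?subrr // => n'; rewrite !inE.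
  case/orP=> [/eqP -> | n'_A]; first by apply: eq_psi; rewrite inE.
  apply: psi_local => k' k'_Zn'; apply: eq_off'; apply: contraTneq k'_Zn' => ->.
  by move: (subsetP sub_A n' n'_A); rewrite !inE.
rewrite (sumW_sub eq_off') => /eqP; rewrite subr_eq0 => /eqP eq_k.
by apply/ffunP => k'; case: (eqVneq k' k) => [-> // | /eq_off'].
Qed.

Lemma decodes_setU1 (T : {set 'I_K}) (V : {set 'I_N}) k n : decodes T V -> k \in Zs S n ->
  k \notin \bigcup_(n' in V) Zs S n' -> decodes (k |: T) (n |: V).
Proof.
move=> dec_TV k_Zn k_notin_V x pQ_gt0 w w' eq_off eq_psi.
pose u : msgs := [ffun k' => if k' == k then w' k else w k'].
have eq_u_w' : u = w'.
  apply: (dec_TV x pQ_gt0) => [k' k'_notin_T | n' n'_V].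
    rewrite ffunE; case: eqP => [-> // | /eqP neq_k'].
    by apply: eq_off; rewrite !inE negb_or neq_k'.
  rewrite -(eq_psi n'); last by rewrite !inE n'_V orbT.
  apply: psi_local => k' k'_Zn'; rewrite ffunE; case: eqP => // eq_k'.
  by move: k_notin_V; rewrite -eq_k' (subsetP (bigcup_sup _ n'_V)).
rewrite -eq_u_w'; apply: (decodes_holder k_Zn pQ_gt0) => [k' | n'].
  by rewrite inE ffunE => /negbTE ->.
by rewrite inE => /eqP ->; rewrite eq_u_w'; apply: eq_psi; rewrite !inE eqxx.
Qed.

Lemma exists_decodes j : (j.-1 * M < K)%nat -> exists (T : {set 'I_K}) (V : {set 'I_N}),
  [/\ #|T| = j, (#|V| <= j)%nat, T \subset \bigcup_(n in V) Zs S n & decodes T V].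
Proof.
elim: j => [_ | j IH lt_jM].
  exists set0, set0; rewrite !cards0 sub0set; split=> // x _ w w' eq_off _.
  by apply/ffunP => k; apply: eq_off; rewrite inE.
have [|T [V [card_T card_V sub_TV dec_TV]]] := IH.
  exact: leq_ltn_trans (leq_mul (leq_pred j) (leqnn M)) lt_jM.
set U := \bigcup_(n in V) Zs S n in sub_TV.
have card_U : (#|U| <= j * M)%nat.
  apply: leq_trans (card_bigcup_le _ _) _; apply: leq_trans (_ : #|V| * M <= _)%nat.
    by rewrite -sum_nat_const leq_sum // => n _; exact: card_Zs_le.
  by rewrite leq_mul2r card_V orbT.
have [k k_notin_U] : exists k, k \notin U.
  apply/existsP; apply: contraLR lt_jM; rewrite negb_exists -leqNgt => /forallP all_U.
  have sub_U : [set: 'I_K] \subset U by apply/subsetP => k' _; exact/negPn/all_U.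
  by have := subset_leq_card sub_U; rewrite cardsT card_ord => /leq_trans; apply.
have [n n_holds_k] : exists n, n \in holders k.
  by apply/card_gt0P; rewrite card_holders addn1.
rewrite inE in n_holds_k.
exists (k |: T), (n |: V); split.
- by rewrite cardsU1 card_T (contra (subsetP sub_TV k) k_notin_U).
- by rewrite cardsU1; lia.
- apply/subsetP => k'; rewrite in_setU1.
  case/orP=> [/eqP -> | /(subsetP sub_TV) /bigcupP[n' n'_V k'_Zn']].
    by apply/bigcupP; exists n; rewrite ?setU11.
  by apply/bigcupP; exists n'; rewrite // setU1r.
- exact: decodes_setU1.
Qed.

Lemma exists_decodes_ceildiv : exists (T : {set 'I_K}) (V : {set 'I_N}),
  #|T| = ceildiv N (N - Nr + 1) /\ decodes T V.
Proof.
have N_gt0 : (0 < N)%nat by apply: leq_trans Nr_le_N.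
have [|T [V [card_T _ _ dec_TV]]] := @exists_decodes (ceildiv N (N - Nr + 1));
  last by exists T, V.
have K_div_gt0 : (0 < K %/ N)%nat by rewrite divn_gt0 // dvdn_leq.
rewrite M_def mulnCA; apply: leq_trans (_ : K %/ N * N <= K)%nat; last by rewrite divnK.
by rewrite ltn_pmul2l // ceildiv_pred_mul_lt.
Qed.

Lemma mu_ge0 o : 0 <= mu o.
Proof. by rewrite /Defs.mu divr_ge0 ?pQ_ge0 ?ler0n. Qed.

Lemma sum_mu_pred (P : pred (omega S)) :
  \sum_(o | P o) mu o = \sum_x (pQ S x / card_msgs%:R) *+ #|[set w | P (w, x)]|.
Proof.
rewrite big_mkcond /=.
have -> : \sum_(o : omega S) (if P o then mu o else 0) =
    \sum_(w : msgs) \sum_(x : QT S) (if P (w, x) then mu (w, x) else 0).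
  by rewrite pair_big; apply: eq_bigr => -[w x].
rewrite exchange_big; apply: eq_bigr => x _ /=.
by rewrite -big_mkcond /= -sumr_const; apply: eq_big => // w; rewrite inE.
Qed.

Lemma natr_card_msgs_neq0 : (card_msgs%:R : R) != 0.
Proof. by rewrite pnatr_eq0 -lt0n card_msgs_gt0. Qed.

Lemma mulrn_card_msgs (P : pred msgs) (y : R) :
  (forall w, P w) -> y / card_msgs%:R *+ #|[set w | P w]| = y.
Proof.
move=> P_all; have -> : #|[set w | P w]| = card_msgs.
  by rewrite -cardsT; apply: eq_card => w; rewrite !inE P_all.
by rewrite -mulr_natr divfK // natr_card_msgs_neq0.
Qed.

Lemma sum_mu1 : \sum_o mu o = 1.
Proof.
have := sum_mu_pred xpredT; rewrite /= => ->; rewrite -[RHS]pQ_sum1.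
by apply: eq_bigr => x _; rewrite mulrn_card_msgs.
Qed.

Lemma prob_eq_Q o : prob_eq mu (fun o => o.2) o = pQ S o.2.
Proof.
rewrite /prob_eq sum_mu_pred (bigD1 o.2) //= big1 => [|x neq_x].
  by rewrite addr0 mulrn_card_msgs.
rewrite (_ : #|[set w : msgs | x == o.2]| = 0%nat) ?mulr0n //; apply: eq_card0 => w.
by rewrite !inE (negbTE neq_x).
Qed.

Lemma prob_eq_msgs o : prob_eq mu (fun o => (o.1, sumW o.1)) o = card_msgs%:R^-1.
Proof.
rewrite /prob_eq sum_mu_pred /=.
have fibre1 : #|[set w : msgs | (w, sumW w) == (o.1, sumW o.1)]| = 1%nat.
  rewrite (_ : [set w | _] = [set o.1]) ?cards1 //.
  by apply/setP => w; rewrite !inE xpair_eqE; case: eqP => // ->; rewrite eqxx.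
under eq_bigr do rewrite fibre1 mulr1n.
by rewrite -mulr_suml pQ_sum1 mul1r.
Qed.

Lemma card_fibre_decodes (T : {set 'I_K}) V x (A : {set msgs}) :
  decodes T V -> 0 < pQ S x ->
  (forall w w', w \in A -> w' \in A -> forall n, n \in V -> psi S n w x = psi S n w' x) ->
  (#|A| * expn #|{: 'rV[F]_L}| #|T| <= card_msgs)%nat.
Proof.
move=> dec_TV pQ_gt0 eq_psi_A.
pose G := {ffun {k : 'I_K | k \in T} -> 'rV[F]_L}.
have card_G : #|{: G}| = expn #|{: 'rV[F]_L}| #|T|.
  by rewrite card_ffun card_sig; congr expn; exact: eq_card.
pose overwrite (p : msgs * G) : msgs :=
  [ffun k => if insub k is Some s then p.2 s else p.1 k].
rewrite -card_G -cardsT -cardsX; apply: (@leq_card_in _ _ overwrite) => -[w1 g1] [w2 g2].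
rewrite !inE /= => /andP[w1_A _] /andP[w2_A _] /ffunP eq_over.
have eq_w : w1 = w2.
  apply: (dec_TV x pQ_gt0) => [k k_notin_T | n n_V]; last exact: eq_psi_A.
  by have := eq_over k; rewrite !ffunE insubN.
rewrite eq_w; congr pair; apply/ffunP => s.
by have := eq_over (val s); rewrite !ffunE valK.
Qed.

Lemma rowseq_inj m (a b : 'rV[F]_m) : rowseq a = rowseq b -> a = b.
Proof. by move=> /eq_in_map eq_ab; apply/rowP => j; apply: eq_ab; rewrite mem_enum. Qed.

Lemma prob_eq_Xall_le (T : {set 'I_K}) V o : decodes T V ->
  prob_eq mu (fun o => (Xall o, sumW o.1)) o <= (#|F|%:R ^+ (L * #|T|))^-1.
Proof.
move=> dec_TV; rewrite /prob_eq sum_mu_pred /=.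
set c := (X in _ <= X); have -> : c = (\sum_x pQ S x) * c by rewrite pQ_sum1 mul1r.
rewrite mulr_suml; apply: ler_sum => x _.
have [pQ_eq0 | pQ_neq0] := eqVneq (pQ S x) 0; first by rewrite pQ_eq0 !mul0r mul0rn.
have pQ_gt0 : 0 < pQ S x by rewrite lt0r pQ_neq0 pQ_ge0.
rewrite -mulr_natr -mulrA ler_wpM2l ?pQ_ge0 // mulrC ler_pdivrMr ?ltr0n ?card_msgs_gt0 //.
rewrite ler_pdivlMl ?exprn_gt0 ?ltr0n ?card_F_gt0 //.
rewrite -natrX -natrM ler_nat mulnC expnM -card_row.
apply: card_fibre_decodes dec_TV pQ_gt0 _ => w w'.
rewrite !inE !xpair_eqE => /andP[/eqP eq_w _] /andP[/eqP eq_w' _] n _.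
move/ffunP/(_ n): eq_w; move/ffunP/(_ n): eq_w'; rewrite !ffunE /= => eq_w' eq_w.
by apply: rowseq_inj; rewrite eq_w eq_w'.
Qed.

Lemma prob_eq_sumW_ge o : (#|F|%:R ^+ L)^-1 <= prob_eq mu (fun o => sumW o.1) o.
Proof.
rewrite /prob_eq sum_mu_pred /=.
under eq_bigr => x _ do rewrite -mulr_natr -mulrA.
rewrite -mulr_suml pQ_sum1 mul1r -natrX mulrC ler_pdivlMr ?ltr0n ?card_msgs_gt0 //.
rewrite mulrC ler_pdivrMr ?ltr0n ?expn_gt0 ?card_F_gt0 //.
rewrite -natrM ler_nat mulnC -card_row.
exact: card_ffun_sum_fibre (Ordinal K_gt0) _.
Qed.

Local Notation H := (entropy_q #|F| mu).

Lemma entropy_sumW_le : H (fun o => sumW o.1) <= L%:R.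
Proof.
apply: (entropy_le (card_finNzRing_gt1 F) mu_ge0 sum_mu1) => o _.
exact: prob_eq_sumW_ge.
Qed.

Lemma entropy_Xall_ge (T : {set 'I_K}) V : decodes T V ->
  (L * #|T|)%:R <= H (fun o => (Xall o, sumW o.1)).
Proof.
move=> dec_TV; apply: (entropy_ge (card_finNzRing_gt1 F) mu_ge0 sum_mu1) => o _.
exact: (prob_eq_Xall_le o dec_TV).
Qed.

Lemma entropy_gap_le_Q :
  H (fun o => (Xall o, sumW o.1)) - H (fun o => sumW o.1) <= H (fun o => o.2).
Proof.
have secure : H (fun o => (o.1, sumW o.1)) + H (fun o => (Xall o, sumW o.1))
    - H (fun o => (o.1, Xall o, sumW o.1)) - H (fun o => sumW o.1) = 0.
  by case: S_valid => _ [_ [_ [_ [_]]]].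
have : H (fun o => (o.1, Xall o, sumW o.1)) <= H (fun o => o.2) + H (fun o => (o.1, sumW o.1)).
  apply: (entropy_le_add (card_finNzRing_gt1 F) mu_ge0) => o _.
  by rewrite prob_eq_Q prob_eq_msgs (prob_eq_ge mu_ge0).
lra.
Qed.

Lemma rand_size_ge_decodes (T : {set 'I_K}) V : decodes T V -> #|T|%:R - 1 <= rand_size S.
Proof.
move=> dec_TV; rewrite /rand_size ler_pdivlMr ?ltr0n // mulrBl mul1r -natrM mulnC.
have := entropy_Xall_ge dec_TV; have := entropy_sumW_le; have := entropy_gap_le_Q; lra.
Qed.

End Scheme.

Theorem corollary2 (K N Nr M : nat)
  (HK : leq 1 K) (HN : leq 1 N) (HNr : leq 1 Nr) (HM : leq 1 M)
  (HNrN : leq Nr N) (HNK : dvdn N K)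
  (HMdef : M = muln (divn K N) (addn (subn N Nr) 1)) :
  exists q0 : nat, forall (F : finFieldType), leq q0 #|F| ->
  forall L : nat, leq 1 L ->
  forall S : scheme K N F L,
    valid_scheme Nr M S ->
    (forall S' : scheme K N F L, valid_scheme Nr M S' -> comm_cost Nr S <= comm_cost Nr S') ->
    (ceildiv N (addn (subn N Nr) 1)).-1%:R <= rand_size S.
Proof.
exists 0%nat => F _ L HL S S_valid _.
have [T [V [card_T dec_TV]]] := exists_decodes_ceildiv HK HL HNr HNrN HNK HMdef S_valid.
have := rand_size_ge_decodes HK HL S_valid dec_TV.
have v_gt0 : (0 < ceildiv N (N - Nr + 1))%nat by rewrite divn_gt0; lia.
rewrite card_T; apply: le_trans; case: (ceildiv _ _) v_gt0 => // v _.
by rewrite -natr1 addrK.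
Qed.
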